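(* Let $(X,\phi)$ be a uniformly Lipschitz flow on a compact metric space $(X,d)$, let $L=L(1)$, and let $\mu\in\mathcal{M}(X)$. Then for every $\epsilon>0$ and every $x\in X$, \begin{align*} \overline{h}^{BK}_\mu(\phi_1,x,\epsilon)\le\overline{h}^{BK}_\mu(\phi,x,\epsilon)\le\overline{h}^{BK}_\mu(\phi_1,x,\epsilon/L),\\ \underline{h}^{BK}_\mu(\phi_1,x,\epsilon)\le\underline{h}^{BK}_\mu(\phi,x,\epsilon)\le\underline{h}^{BK}_\mu(\phi_1,x,\epsilon/L). \end{align*}
   Context: A flow: $\phi:X\times\mathbb{R}\to X$ continuous, $\phi_t(x)=\phi(x,t)$, $\phi_0=\mathrm{id}$, $\phi_{t+s}=\phi_t\circ\phi_s$. Uniformly Lipschitz: for every $t_0>0$ there is $L(t_0)>0$ such that for all $\epsilon>0$ and $x,y\in X$, $d(x,y)\le\epsilon/L(t_0)$ implies $d(\phi_sx,\phi_sy)<\epsilon$ for all $s\in[0,t_0]$. $\mathcal{M}(X)$: Borel probability measures on $X$. Balls: $B_t(x,\epsilon,\phi)=\{y:d(\phi_sx,\phi_sy)<\epsilon\ \forall s\in[0,t]\}$, $B_n(x,\epsilon,\phi_1)=\{y:d(\phi_jx,\phi_jy)<\epsilon,\ j=0,\dots,n-1\}$. Local entropies: $\overline{h}^{BK}_\mu(\phi,x,\epsilon)=\limsup_{t\to\infty}-\frac1t\log\mu(B_t(x,\epsilon,\phi))$, $\underline{h}^{BK}_\mu(\phi,x,\epsilon)=\liminf_{t\to\infty}-\frac1t\log\mu(B_t(x,\epsilon,\phi))$,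 and $\overline{h}^{BK}_\mu(\phi_1,x,\epsilon)$, $\underline{h}^{BK}_\mu(\phi_1,x,\epsilon)$ are the $\limsup$, $\liminf$ over $n\in\mathbb{N}$, $n\to\infty$, of $-\frac1n\log\mu(B_n(x,\epsilon,\phi_1))$. *)

From HB Require Import structures.
From mathcomp Require Import all_boot all_order all_algebra.
From mathcomp Require Import all_classical all_reals all_analysis.
Set Implicit Arguments. Unset Strict Implicit. Unset Printing Implicit Defensive.
Import Order.TTheory GRing.Theory Num.Theory.
Import numFieldNormedType.Exports.
Local Open Scope classical_set_scope.
Local Open Scope ring_scope.

#[short(type="pmetricType")]
HB.structure Definition PointedMetric (K : numDomainType) :=
  { M of Metric K M & isPointed M }.

Section Flows.
Context {R : realType} {X : pmetricType R}.

Definition borelX := g_sigma_algebraType (@open X).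

(** phi x t = phi_t(x);  a (continuous) flow *)
Definition is_flow (phi : X -> R -> X) : Prop :=
  continuous (fun p : X * R => phi p.1 p.2) /\
  (forall x, phi x 0 = x) /\
  (forall x t s, phi x (t + s) = phi (phi x s) t).

Definition unif_lipschitz_with (phi : X -> R -> X) (L : R -> R) : Prop :=
  forall t0, 0 < t0 ->
    0 < L t0 /\
    forall eps, 0 < eps -> forall x y, mdist x y <= eps / L t0 ->
      forall s, 0 <= s <= t0 -> mdist (phi x s) (phi y s) < eps.

Definition bowen_ball_flow (phi : X -> R -> X) (t : R) (x : X) (eps : R) : set X :=
  [set y | forall s, 0 <= s <= t -> mdist (phi x s) (phi y s) < eps].

Definition bowen_ball_map (phi : X -> R -> X) (n : nat) (x : X) (eps : R) : set X :=
  [set y | forall j : nat, (j < n)%N -> mdist (phi x j%:R) (phi y j%:R) < eps].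

(** - (1/t) log m, as an extended real (= +oo when m = 0) *)
Definition neglog_rate (m : \bar R) (t : R) : \bar R :=
  ((- lne m) * (t^-1)%:E)%E.

Definition upper_BK_flow (mu : probability borelX R) (phi : X -> R -> X) (x : X) (eps : R) : \bar R :=
  limf_esup (fun t : R => neglog_rate (mu (bowen_ball_flow phi t x eps)) t) (pinfty_nbhs R).

Definition lower_BK_flow (mu : probability borelX R) (phi : X -> R -> X) (x : X) (eps : R) : \bar R :=
  limf_einf (fun t : R => neglog_rate (mu (bowen_ball_flow phi t x eps)) t) (pinfty_nbhs R).

Definition upper_BK_map (mu : probability borelX R) (phi : X -> R -> X) (x : X) (eps : R) : \bar R :=
  limn_esup (fun n : nat => neglog_rate (mu (bowen_ball_map phi n x eps)) n%:R).

Definition lower_BK_map (mu : probability borelX R) (phi : X -> R -> X) (x : X) (eps : R) : \bar R :=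
  limn_einf (fun n : nat => neglog_rate (mu (bowen_ball_map phi n x eps)) n%:R).

End Flows.

(* Bowen balls of the flow and of its time-one map are nested up to a change
   of time by at most one and of radius by the factor L = L(1): closeness on
   [0, t] gives closeness at the integer times j < t + 1, and eps/L-closeness at
   the integer times j < n gives eps-closeness on [0, n], because
   phi_s = phi_(s - j) o phi_j with s - j in [0, 1].  Applying -(1/t) log mu to
   these inclusions compares the local entropy rates pointwise, up to a factor
   n/t that tends to 1, and the comparison passes to limsup and liminf.  The
   flow Bowen balls are open, hence Borel, since by the Lipschitz condition the
   orbit segment over [0, t] depends continuously on the point, uniformly in
   time. *)

From HB Require Import structures.
From mathcomp Require Import all_boot all_order all_algebra.
From mathcomp Require Import all_classical all_reals all_analysis.
From mathcomp Require Import lra zify.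
Set Implicit Arguments.
Unset Strict Implicit.
Unset Printing Implicit Defensive.

Import Order.TTheory GRing.Theory Num.Theory.
Import numFieldNormedType.Exports.
Local Open Scope classical_set_scope.
Local Open Scope ring_scope.

Section real_line.
Context {R : realType}.

Lemma truncS_bounds (t : R) : 0 <= t -> t < (Num.trunc t).+1%:R <= t + 1.
Proof. by move=> t0; have /andP[trunc_le ->] := truncn_itv t0; rewrite -natr1 lerD2r. Qed.

Lemma nat_segment_cover (n : nat) (s : R) : (0 < n)%N -> 0 <= s -> s <= n%:R ->
  exists2 j, (j < n)%N & j%:R <= s <= j%:R + 1.
Proof.
move=> n0 s0 sn; case: (ltP s n%:R) => [s_lt_n|n_le_s].
  exists (Num.trunc s); first by rewrite truncn_lt_nat.
  by have /andP[-> /ltW] := truncn_itv s0; rewrite -natr1.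
exists n.-1; first by rewrite prednK.
by rewrite natr1 prednK// sn andbT (le_trans _ n_le_s)// ler_nat leq_pred.
Qed.

End real_line.

Section metric.
Context {R : realType} {X : metricType R}.

Lemma mdist_lipschitz (a b a' b' : X) :
  `|mdist a b - mdist a' b'| <= mdist a a' + mdist b b'.
Proof.
have := metric_triangle a a' b; have := metric_triangle a' b' b.
have := metric_triangle a' a b'; have := metric_triangle a b b'.
rewrite (metric_sym a a') (metric_sym b b') ler_norml; lra.
Qed.

Lemma continuous_mdist {T : topologicalType} (f g : T -> X) :
  continuous f -> continuous g -> continuous (fun t => mdist (f t) (g t)).
Proof.
move=> cf cg t; apply/cvgrPdist_lt => e e0.
have e20 : 0 < e / 2 by rewrite divr_gt0.
have ft := metricType_numDomainType.cvgr_dist_lt (cf t) e20.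
have gt := metricType_numDomainType.cvgr_dist_lt (cg t) e20.
near=> u; apply: le_lt_trans (mdist_lipschitz _ _ _ _) _.
rewrite [e]splitr; apply: ltrD; near: u; [exact: ft | exact: gt].
Unshelve. all: end_near. Qed.

Lemma open_mdistP (B : set X) :
  (forall y, B y -> exists2 r, 0 < r & forall y', mdist y y' < r -> B y') ->
  open B.
Proof.
move=> Bnbhs; rewrite openE => y /Bnbhs[r r0 rB].
by apply/metricType_numDomainType.nbhs_mdistP; exists r.
Qed.

End metric.

Section limit_comparison.
Context {R : realType}.
Implicit Types (f : R -> \bar R) (g : nat -> \bar R).
Local Open Scope ereal_scope.

Lemma pinfty_nbhs_natr (W : set R) :
  pinfty_nbhs R W -> exists N, forall n, (N <= n)%N -> W n%:R.
Proof. by move=> /(@cvgr_idn R) [N _ WN]; exists N. Qed.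

Lemma limn_esup_le_limf_esup f g :
  (forall n, (0 < n)%N -> g n.+1 <= f n%:R) ->
  limn_esup g <= limf_esup f (pinfty_nbhs R).
Proof.
move=> gf; rewrite /limn_esup !limf_esupE.
apply: le_ereal_inf_tmp => _ [W /pinfty_nbhs_natr[N WN] <-].
apply: (@le_trans _ _ (ereal_sup (g @` [set n | (N.+2 <= n)%N]))).
  by apply: ereal_inf_lbound; exists [set n | (N.+2 <= n)%N] => //; exists N.+2.
apply: ub_ereal_sup => _ [[|n] /= Nn <-] //.
apply: (le_trans (gf n _)); first by lia.
by apply: ereal_sup_ubound; exists n%:R => //; apply: WN; lia.
Qed.

Lemma limf_einf_le_limn_einf f g :
  (forall n, (0 < n)%N -> f n%:R <= g n) ->
  limf_einf f (pinfty_nbhs R) <= limn_einf g.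
Proof.
move=> fg; rewrite /limn_einf -/(limf_einf g \oo) !limf_einfE.
apply: ub_ereal_sup => _ [W /pinfty_nbhs_natr[N WN] <-].
apply: le_ereal_sup_tmp; exists (ereal_inf (g @` [set n | (N.+1 <= n)%N])).
  by exists [set n | (N.+1 <= n)%N] => //; exists N.+1.
apply: le_ereal_inf_tmp => _ [n /= Nn <-].
apply: le_trans (fg n _); last by lia.
by apply: ereal_inf_lbound; exists n%:R => //; apply: WN; lia.
Qed.

Lemma limn_einf_le_limf_einf f g :
  (forall t, (0 < t)%R -> g (Num.trunc t).+1 <= f t) ->
  limn_einf g <= limf_einf f (pinfty_nbhs R).
Proof.
move=> gf; rewrite /limn_einf -/(limf_einf g \oo) !limf_einfE.
apply: ub_ereal_sup => _ [V [N _ NV] <-].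
apply: le_ereal_sup_tmp; exists (ereal_inf (f @` [set t | (N%:R < t)%R])).
  by exists [set t | (N%:R < t)%R] => //; exists N%:R; split => //; exact: num_real.
apply: le_ereal_inf_tmp => _ [t /= Nt <-].
have t0 : (0 < t)%R by apply: le_lt_trans Nt.
apply: le_trans (gf t t0); apply: ereal_inf_lbound; exists (Num.trunc t).+1 => //.
have /andP[tS _] := truncS_bounds (ltW t0).
by apply/NV/ltnW; rewrite -(ltr_nat R); apply: lt_trans Nt tS.
Qed.

Lemma limf_esup_le_limn_esup f g :
  (forall n, 0 <= g n) ->
  (forall t, (1 <= t)%R ->
     f t <= g (Num.trunc t).+1 * ((Num.trunc t).+1%:R / t)%:E) ->
  limf_esup f (pinfty_nbhs R) <= limn_esup g.
Proof.
move=> g0 fg; have : 0 <= limn_esup g by exact: limf_esup_ge0.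
case E : (limn_esup g) => [s| |] // s0; last exact: leey.
move: s0; rewrite lee_fin => s0; apply/lee_addgt0Pr => d d0.
set c := (s + d / 2)%R.
have /ereal_inf_lt[_ [V [N _ NV] <-] supV] :
    ereal_inf [set ereal_sup (g @` V) | V in \oo] < c%:E.
  by rewrite -limf_esupE -/(limn_esup g) E lte_fin ltrDl divr_gt0.
have gc n : (N <= n)%N -> g n <= c%:E.
  move=> Nn; apply/ltW/(le_lt_trans _ supV)/ereal_sup_ubound.
  by exists n => //; apply: NV.
pose M := (Num.max (Num.max N%:R 1) (c / (d / 2)))%R.
apply: (@le_trans _ _ (ereal_sup (f @` [set t | (M < t)%R]))).
  rewrite limf_esupE; apply: ereal_inf_lbound; exists [set t | (M < t)%R] => //.
  by exists M; split => //; exact: num_real.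
apply: ub_ereal_sup => _ [t /= + <-]; rewrite !gt_max => /andP[/andP[Nt t1] ct].
have t0 : (0 < t)%R by lra.
have /andP[tn nt] := truncS_bounds (ltW t0); set n := (Num.trunc t).+1 in tn nt *.
have Nn : (N <= n)%N by rewrite -(ler_nat R); apply/ltW/(lt_trans Nt tn).
apply: (le_trans (fg t (ltW t1))).
apply: (le_trans (lee_wpmul2r _ (gc n Nn))); first by rewrite lee_fin divr_ge0// ltW.
rewrite -EFinM -EFinD lee_fin mulrA ler_pdivrMr//.
move: ct; rewrite ltr_pdivrMr ?divr_gt0// => ct.
have : (c * n%:R <= c * (t + 1))%R by apply: ler_wpM2l => //; rewrite /c; lra.
rewrite -/n /c in ct *; nra.
Qed.

End limit_comparison.

Section flow.
Context {R : realType} {X : pmetricType R} (phi : X -> R -> X) (L : R -> R).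
Hypotheses (hflow : is_flow phi) (hlip : unif_lipschitz_with phi L).

Lemma flow_continuous_time x : continuous (phi x).
Proof.
move=> s; apply: (@continuous2_cvg _ _ _ _ _ _ (fun=> x) id phi x s).
- exact: hflow.1 (x, s).
- exact: cvg_cst.
- exact: cvg_id.
Qed.

Lemma flow_continuous_space s : continuous (phi^~ s).
Proof.
move=> x; apply: (@continuous2_cvg _ _ _ _ _ _ id (fun=> s) phi x s).
- exact: hflow.1 (x, s).
- exact: cvg_id.
- exact: cvg_cst.
Qed.

Lemma unif_lipschitz_near t y e : 0 <= t -> 0 < e ->
  exists2 r, 0 < r & forall y', mdist y y' < r ->
    forall s, 0 <= s <= t -> mdist (phi y s) (phi y' s) < e.
Proof.
move=> t0 e0; have t1 : 0 < Num.max t 1 by rewrite lt_max ltr01 orbT.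
have [L0 lip] := hlip t1; exists (e / L (Num.max t 1)); first by rewrite divr_gt0.
move=> y' yy' s /andP[s0 st]; apply: lip => //; first exact: ltW.
by rewrite s0 (le_trans st)// le_max lexx.
Qed.

Lemma open_flow_dist_lt s x e : open [set y | mdist (phi x s) (phi y s) < e].
Proof.
have : continuous (fun y => mdist (phi x s) (phi y s)).
  by apply: continuous_mdist; [exact: cst_continuous | exact: flow_continuous_space].
by move=> /continuousP/(_ _ (@open_lt R e)).
Qed.

Lemma open_bowen_ball_flow t x e : open (bowen_ball_flow phi t x e).
Proof.
apply: open_mdistP => y xy; case: (ltP t 0) => [t_lt0|t0].
  by exists 1 => // y' _ s /andP[s0 st]; lra.
have [c c0t cmax] : exists2 c, c \in `[0, t] &
    forall s, s \in `[0, t] -> mdist (phi x s) (phi y s) <= mdist (phi x c) (phi y c).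
  apply: EVT_max t0 _; apply: continuous_subspaceT.
  by apply: continuous_mdist; exact: flow_continuous_time.
move: c0t; rewrite in_itv /= => /xy xyc.
have d0 : 0 < e - mdist (phi x c) (phi y c) by rewrite subr_gt0.
have [r r0 near_y] := unif_lipschitz_near y t0 d0.
exists r => // y' yy' s st; have := near_y y' yy' s st.
have := cmax s; rewrite in_itv /= => /(_ st).
have := metric_triangle (phi x s) (phi y s) (phi y' s); lra.
Qed.

Lemma bowen_ball_map0 x e : bowen_ball_map phi 0 x e = setT.
Proof. by apply/seteqP; split. Qed.

Lemma bowen_ball_mapS n x e : bowen_ball_map phi n.+1 x e =
  bowen_ball_map phi n x e `&` [set y | mdist (phi x n%:R) (phi y n%:R) < e].
Proof.
apply/seteqP; split => y /=.
  by move=> xy; split => [j jn|]; apply: xy; lia.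
by move=> [xy xyn] j; rewrite ltnS leq_eqVlt => /orP[/eqP->|/xy].
Qed.

Lemma open_bowen_ball_map n x e : open (bowen_ball_map phi n x e).
Proof.
elim: n => [|n IH]; first by rewrite bowen_ball_map0; exact: openT.
by rewrite bowen_ball_mapS; apply: openI => //; exact: open_flow_dist_lt.
Qed.

Lemma bowen_ball_flow_sub_map t n x e : n%:R <= t + 1 ->
  bowen_ball_flow phi t x e `<=` bowen_ball_map phi n x e.
Proof.
move=> nt y xy j jn; apply: xy; rewrite ler0n /=.
have : j.+1%:R <= n%:R :> R by rewrite ler_nat.
rewrite -natr1; lra.
Qed.

Lemma bowen_ball_map_sub_flow t n x e : 0 < e -> (0 < n)%N -> t <= n%:R ->
  bowen_ball_map phi n x (e / L 1) `<=` bowen_ball_flow phi t x e.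
Proof.
move=> e0 n0 tn y xy s /andP[s0 st].
have [j jn /andP[js sj]] := nat_segment_cover n0 s0 (le_trans st tn).
have shift z : phi z s = phi (phi z j%:R) (s - j%:R) by rewrite -hflow.2.2 subrK.
have [_ lip] := hlip ltr01.
rewrite !shift; apply: lip => //; first exact/ltW/xy.
by rewrite subr_ge0 js lerBlDl.
Qed.

End flow.

Section rates.
Context {R : realType}.
Local Open Scope ereal_scope.

Lemma neglog_rate_ge0 (m : \bar R) (t : R) :
  m <= 1 -> (0 <= t)%R -> 0 <= neglog_rate m t.
Proof. by move=> m1 t0; rewrite mule_ge0 ?lee_fin ?invr_ge0// oppe_ge0 lne_le0. Qed.

Lemma neglog_rate_le (m m' : \bar R) (t u : R) :
  0 <= m' -> m' <= m -> m <= 1 -> (0 < t)%R -> (t <= u)%R ->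
  neglog_rate m u <= neglog_rate m' t.
Proof.
move=> m'0 m'm m1 t0 tu; have u0 := lt_le_trans t0 tu.
apply: lee_pmul; rewrite ?lee_fin ?invr_ge0 ?(ltW u0)//.
- by rewrite oppe_ge0 lne_le0.
- by rewrite leeN2 lee_lne// !in_itv /= !leey !andbT// (le_trans m'0 m'm).
- by rewrite lef_pV2 ?posrE.
Qed.

Lemma neglog_rate_rescale (m : \bar R) (t u : R) : u != 0%R ->
  neglog_rate m t = neglog_rate m u * (u / t)%:E.
Proof. by move=> u0; rewrite /neglog_rate -muleA -EFinM mulrA mulVf ?mul1r. Qed.

End rates.

Section bowen_rates.
Context {R : realType} {X : pmetricType R} (phi : X -> R -> X) (L : R -> R).
Hypotheses (hflow : is_flow phi) (hlip : unif_lipschitz_with phi L).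
Variables (mu : probability (@borelX R X) R) (x : X) (eps : R).
Hypothesis eps0 : 0 < eps.
Local Open Scope ereal_scope.

Lemma borelX_open_measurable (A : set X) : open A -> measurable (A : set borelX).
Proof. exact: sub_gen_smallest. Qed.

Lemma measurable_bowen_ball_map n e :
  measurable (bowen_ball_map phi n x e : set borelX).
Proof. by apply: borelX_open_measurable; exact: open_bowen_ball_map. Qed.

Lemma measurable_bowen_ball_flow t e :
  measurable (bowen_ball_flow phi t x e : set borelX).
Proof. by apply: borelX_open_measurable; exact: (open_bowen_ball_flow hflow hlip). Qed.

Lemma map_rate_ge0 n e : 0 <= neglog_rate (mu (bowen_ball_map phi n x e)) n%:R.
Proof.
apply: neglog_rate_ge0 => //.
exact: probability_le1 (measurable_bowen_ball_map _ _).
Qed.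

Lemma map_rate_le_flow_rate n t : (0 < t)%R -> (t <= n%:R <= t + 1)%R ->
  neglog_rate (mu (bowen_ball_map phi n x eps)) n%:R <=
  neglog_rate (mu (bowen_ball_flow phi t x eps)) t.
Proof.
move=> t0 /andP[tn nt]; apply: neglog_rate_le => //.
- apply: le_measure; rewrite ?inE.
  + exact: measurable_bowen_ball_flow.
  + exact: measurable_bowen_ball_map.
  + exact: bowen_ball_flow_sub_map nt.
- exact: probability_le1 (measurable_bowen_ball_map _ _).
Qed.

Lemma flow_rate_le_map_rate n t : (0 < n)%N -> (0 < t <= n%:R)%R ->
  neglog_rate (mu (bowen_ball_flow phi t x eps)) t <=
  neglog_rate (mu (bowen_ball_map phi n x (eps / L 1)%R)) n%:R * (n%:R / t)%:E.
Proof.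
move=> n0 /andP[t0 tn]; rewrite -neglog_rate_rescale ?pnatr_eq0 -?lt0n//.
apply: neglog_rate_le => //.
- apply: le_measure; rewrite ?inE.
  + exact: measurable_bowen_ball_map.
  + exact: measurable_bowen_ball_flow.
  + exact: (bowen_ball_map_sub_flow hflow hlip eps0 n0 tn).
- exact: probability_le1 (measurable_bowen_ball_flow _ _).
Qed.

End bowen_rates.

Theorem proposition3p1 (R : realType) (X : pmetricType R)
  (phi : X -> R -> X) (L : R -> R)
  (Xcompact : compact [set: X])
  (hflow : is_flow phi)
  (hlip : unif_lipschitz_with phi L)
  (mu : probability (@borelX R X) R) :
  forall (eps : R), 0 < eps -> forall x : X,
    ((upper_BK_map mu phi x eps <= upper_BK_flow mu phi x eps)%E /\
     (upper_BK_flow mu phi x eps <= upper_BK_map mu phi x (eps / L 1)%R)%E) /\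
    ((lower_BK_map mu phi x eps <= lower_BK_flow mu phi x eps)%E /\
     (lower_BK_flow mu phi x eps <= lower_BK_map mu phi x (eps / L 1)%R)%E).
Proof.
move=> eps eps0 x; split; split.
- apply: limn_esup_le_limf_esup => n n0.
  apply: (map_rate_le_flow_rate hflow hlip); rewrite ?ltr0n//.
  by rewrite -natr1 lexx lerDl ler01.
- apply: limf_esup_le_limn_esup => [n|t t1]; first exact: (map_rate_ge0 hflow).
  have /andP[tS St] := truncS_bounds (le_trans ler01 t1).
  apply: (flow_rate_le_map_rate hflow hlip) => //.
  by rewrite (lt_le_trans ltr01 t1) (ltW tS).
- apply: limn_einf_le_limf_einf => t t0.
  have /andP[tS St] := truncS_bounds (ltW t0).
  by apply: (map_rate_le_flow_rate hflow hlip) => //; rewrite (ltW tS) St.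
- apply: limf_einf_le_limn_einf => n n0.
  have := flow_rate_le_map_rate hflow hlip mu x eps0 n0 (t := n%:R).
  by rewrite divff ?mule1 ?pnatr_eq0 -?lt0n// ltr0n n0 lexx => /(_ isT).
Qed.
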